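(* Let $A\subset\omega$ be co-infinite and let $u_0,\dots,u_n\in\mathcal M$ be such that $\bigcup_{k=0}^nu_k(A)$ is co-infinite. Then there exists $\chi\in\mathcal M_A$ such that $\bigcup_{k=0}^n\mathrm{im}(u_k\chi)$ is co-infinite.
   Context: $\omega=\{1,2,\dots\}$, $\mathcal M$ the monoid of injections $\omega\to\omega$, and $\mathcal M_A$ the submonoid of injections fixing $A\subset\omega$ elementwise. A subset of $\omega$ is co-infinite if its complement in $\omega$ is infinite. *)

From mathcomp Require Import all_boot.
From mathcomp Require Import boolp classical_sets cardinality.
Set Implicit Arguments. Unset Strict Implicit. Unset Printing Implicit Defensive.
Local Open Scope classical_set_scope.

(* omega is modelled by nat (a relabelling n |-> n+1 of {1,2,...}). *)

Definition inM (u : nat -> nat) : Prop := injective u.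

Definition inMA (A : set nat) (chi : nat -> nat) : Prop :=
  injective chi /\ (forall a, A a -> chi a = a).

Definition coinfinite (S : set nat) : Prop := infinite_set (~` S).

(** Let E be the complement of the union of the u_k(A) and C the complement
    of A, both infinite. Interleave points e_0 < d_0 < e_1 < d_1 < ... with
    e_i in E and d_i in C, choosing d_i so large that every u_k(d_i) exceeds
    e_i, and then e_(i+1) beyond all the u_k(d_i); thus no e_j is of the form
    u_k(d_i). The injection chi fixing A and sending each x outside A to d_x
    then has every u_k chi avoid all the e_j. *)
From mathcomp Require Import all_boot.
From mathcomp Require Import boolp classical_sets cardinality.
Local Open Scope classical_set_scope.

Lemma infinite_set_nat_gt {S : set nat} m :
  infinite_set S -> exists2 x, S x & (m < x)%N.
Proof.
move=> /infinite_setD/(_ (finite_II m.+1))/infinite_setN0[x [Sx /= xm]].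
by exists x; rewrite // ltnNge -ltnS; apply/negP.
Qed.

Lemma infinite_set_inj {S : set nat} {f : nat -> nat} :
  injective f -> (forall i, S (f i)) -> infinite_set S.
Proof.
move=> f_inj Sf; apply/infiniteP/pcard_leP/injfunPex.
by exists f => // i j _ _ /f_inj.
Qed.

Section SeparatingChoices.
Variables (E C : set nat) (n : nat) (u : nat -> nat -> nat).
Hypotheses (E_infinite : infinite_set E) (C_infinite : infinite_set C).
Hypothesis u_inj : forall k, (k <= n)%N -> injective (u k).

Lemma finite_small_values e :
  finite_set (`I_e.+1 `|` \bigcup_(k in [set k | (k <= n)%N]) (u k @^-1` `I_e.+1)).
Proof.
rewrite finite_setU; split; first exact: finite_II.
apply: bigcup_finite => [|k kn].
  by apply: (@sub_finite_set _ _ `I_n.+1 _ (finite_II _)) => k /=; rewrite ltnS.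
by apply: finite_preimage (finite_II _) => x y _ _; apply: u_inj.
Qed.

Lemma exists_separated_pair m :
  exists e, [/\ E e, (m < e)%N &
    exists d, [/\ C d, (e < d)%N & forall k, (k <= n)%N -> (e < u k d)%N]].
Proof.
have [e Ee me] := infinite_set_nat_gt m E_infinite.
exists e; split=> //.
have /infinite_setN0[d [Cd /= large_d]] :=
  infinite_setD C_infinite (finite_small_values e).
exists d; split=> // [|k kn]; rewrite ltnNge -ltnS; apply/negP => small.
  by apply: large_d; left.
by apply: large_d; right; exists k.
Qed.

Lemma exists_separating_choices :
  exists ep dp : nat -> nat,
    [/\ forall m, E (ep m), forall m, C (dp m), forall m, (m < ep m)%N,
        forall m, (ep m < dp m)%N &
        forall m k, (k <= n)%N -> (ep m < u k (dp m))%N].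
Proof.
have [ep ep_spec] := choice exists_separated_pair.
have [Eep ep_gt /choice[dp dp_spec]] := all_and3 ep_spec.
have [Cdp ep_lt_dp ep_lt_u_dp] := all_and3 dp_spec.
by exists ep, dp.
Qed.

End SeparatingChoices.

Section Interleaving.
Variables (n : nat) (u : nat -> nat -> nat) (ep dp : nat -> nat).
Hypothesis ep_gt : forall m, (m < ep m)%N.
Hypothesis ep_lt_dp : forall m, (ep m < dp m)%N.
Hypothesis ep_lt_u_dp : forall m k, (k <= n)%N -> (ep m < u k (dp m))%N.

(* [ep m < dp m] is a separated pair chosen beyond the threshold [m]; the
   next threshold bounds [dp m] and all the [u k (dp m)]. *)
Let next m := maxn (dp m) (\max_(k < n.+1) u k (dp m)).
Let thr i := iter i next 0.

Lemma dp_thr_le i : (dp (thr i) <= thr i.+1)%N.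
Proof. exact: leq_maxl. Qed.

Lemma u_dp_thr_le i k : (k <= n)%N -> (u k (dp (thr i)) <= thr i.+1)%N.
Proof.
rewrite -ltnS => kn; have -> : thr i.+1 = next (thr i) by [].
apply: leq_trans (leq_maxr _ _).
exact: (@leq_bigmax _ (fun j : 'I_n.+1 => u j (dp (thr i))) (Ordinal kn)).
Qed.

Lemma ep_thr_lt i : (ep (thr i) < thr i.+1)%N.
Proof. exact: leq_trans (ep_lt_dp _) (dp_thr_le i). Qed.

Lemma thr_increasing : {homo thr : i j / (i < j)%N}.
Proof. by apply: homo_ltn ltn_trans _ => i; apply: ltn_trans (ep_thr_lt i). Qed.

Lemma ep_thr_increasing : {homo ep \o thr : i j / (i < j)%N}.
Proof.
by apply: homo_ltn ltn_trans _ => i; apply: ltn_trans (ep_thr_lt i) (ep_gt _).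
Qed.

Lemma dp_thr_increasing : {homo dp \o thr : i j / (i < j)%N}.
Proof.
apply: homo_ltn ltn_trans _ => i /=.
exact: leq_ltn_trans (dp_thr_le i) (ltn_trans (ep_gt _) (ep_lt_dp _)).
Qed.

Lemma ep_thr_neq_u_dp_thr i j k :
  (k <= n)%N -> ep (thr j) <> u k (dp (thr i)).
Proof.
move=> kn; apply/eqP; rewrite neq_ltn; case: (leqP j i) => [ji|ij].
  have ep_le : (ep (thr j) <= ep (thr i))%N.
    by have /= -> := leq_mono ep_thr_increasing j i.
  by rewrite (leq_ltn_trans ep_le (ep_lt_u_dp _ _ kn)).
have thr_le : (thr i.+1 <= thr j)%N by rewrite (leq_mono thr_increasing).
have thrS_lt_ep := leq_ltn_trans thr_le (ep_gt (thr j)).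
by rewrite (leq_ltn_trans (u_dp_thr_le _ _ kn) thrS_lt_ep) orbT.
Qed.

Lemma exists_interleaving_thresholds : exists s : nat -> nat,
  [/\ injective (ep \o s), injective (dp \o s) &
      forall i j k, (k <= n)%N -> ep (s j) <> u k (dp (s i))].
Proof.
exists thr; split; last exact: ep_thr_neq_u_dp_thr.
  exact/incn_inj/leq_mono/ep_thr_increasing.
exact/incn_inj/leq_mono/dp_thr_increasing.
Qed.

End Interleaving.

Definition extend_id (A : set nat) (d : nat -> nat) x :=
  if `[< A x >] then x else d x.

Lemma extend_id_inMA A d :
  injective d -> (forall x, ~ A (d x)) -> inMA A (extend_id A d).
Proof.
move=> d_inj dNA; split=> [x y|a Aa]; rewrite /extend_id; last first.
  by case: asboolP.
case: asboolP => Ax; case: asboolP => Ay //.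
- by move=> xd; have := dNA y; rewrite -xd.
- by move=> dy; have := dNA x; rewrite dy.
- exact: d_inj.
Qed.

Lemma range_comp_extend_id (v : nat -> nat) A d :
  range (v \o extend_id A d) `<=` v @` A `|` range (v \o d).
Proof.
move=> _ [x _ <-]; rewrite /extend_id /=; case: asboolP => Ax.
  by left; exists x.
by right; exists x.
Qed.

Theorem proposition2p7 (A : set nat) (n : nat) (u : nat -> nat -> nat) :
  coinfinite A ->
  (forall k, (k <= n)%N -> inM (u k)) ->
  coinfinite (\bigcup_(k in [set k | (k <= n)%N]) (u k @` A)) ->
  exists chi : nat -> nat, inMA A chi /\
    coinfinite (\bigcup_(k in [set k | (k <= n)%N]) range (u k \o chi)).
Proof.
rewrite /coinfinite /inM => CA_infinite u_inj E_infinite.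
have [ep [dp [Eep CAdp ep_gt ep_lt_dp ep_lt_u_dp]]] :=
  @exists_separating_choices _ _ n u E_infinite CA_infinite u_inj.
have [s [ep_inj dp_inj ep_neq_u_dp]] :=
  @exists_interleaving_thresholds n u ep dp ep_gt ep_lt_dp ep_lt_u_dp.
exists (extend_id A (dp \o s)); split.
  by apply: extend_id_inMA => // x; apply: CAdp.
apply: (infinite_set_inj ep_inj) => j [k kn /range_comp_extend_id[]].
  by move=> uAe; apply: (Eep (s j)); exists k.
by move=> [i _ /= /esym]; apply: ep_neq_u_dp.
Qed.
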